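(* In the setting described in the context, assume $t$ is prime, and let $O_{i_1},\dots,O_{i_{s(p,t)}}$ be representatives of the orbits of the action of $\langle\tau\rangle$ on $\{O_1,\dots,O_{t-1}\}$ (where $\tau(O_i)=O_{pi\bmod t}$). Then $$w_0+\frac{t-1}{s(p,t)}\sum_{j=1}^{s(p,t)}w_{i_j}=q+1,\qquad w_0^2+\frac{t-1}{s(p,t)}\sum_{j=1}^{s(p,t)}w_{i_j}^2=\frac{q^2+(t+1)q+1}{t}.$$
   Context: Let $q=p^h$ with $p$ prime, $h\ge1$. Let $\alpha$ be a primitive element of $\mathbb{F}_{q^3}$; the points of $PG(2,q)$ are the 1-dimensional $\mathbb{F}_q$-subspaces of $\mathbb{F}_{q^3}$, and $P_i$ denotes the point represented by $\alpha^i$, so $PG(2,q)=\{P_0,\dots,P_{q^2+q}\}$. Let $\tau:P_i\mapsto P_{ip\bmod(q^2+q+1)}$ (a collineation) and let $\ell_0$ be a line of $PG(2,q)$ fixed by $\tau$. Let $t$ be a positive divisor of $q^2+q+1$ and for $i=0,\dots,t-1$ let $O_i=\{P_u:u\equiv i\pmod t\}$. For $u=0,\dots,t-1$ let $w_u=|\ell_0\cap O_u|$. Let $s(p,t)$ be the number of orbits on $\mathbb{Z}_t\setminus\{0\}$ of the group generated by $i\mapsto p\cdot i\pmod t$. *)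

From HB Require Import structures.
From mathcomp Require Import all_boot all_order all_algebra.
Set Implicit Arguments. Unset Strict Implicit. Unset Printing Implicit Defensive.
Import GRing.Theory.

(* Number of points of PG(2,q): q^2+q+1, written as a successor so that
   'I_(npts q) is nonempty by construction. *)
Definition npts (q : nat) : nat := (q ^ 2 + q).+1.

Definition is_Fq_subspace (F : finFieldType) (q : nat) (W : {set F}) : Prop :=
  [/\ (0%R : F) \in W,
      (forall x y : F, x \in W -> y \in W -> (x + y)%R \in W) &
      (forall c x : F, (c ^+ q)%R = c -> x \in W -> (c * x)%R \in W)].

(* A line of PG(2,q): a 2-dimensional F_q-subspace, i.e. one with q^2 elements. *)
Definition is_line (F : finFieldType) (q : nat) (W : {set F}) : Prop :=
  is_Fq_subspace q W /\ #|W| = (q ^ 2)%N.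

(* Indices i (0 <= i < q^2+q+1) of the points P_i = <alpha^i> lying on W. *)
Definition line_pts (F : finFieldType) (q : nat) (alpha : F) (W : {set F})
  : {set 'I_(npts q)} := [set i : 'I_(npts q) | (alpha ^+ i)%R \in W].

Definition tau_pt (q p : nat) (i : 'I_(npts q)) : 'I_(npts q) :=
  Ordinal (ltn_pmod (i * p) (ltn0Sn (q ^ 2 + q))).

Definition wcount (F : finFieldType) (q t : nat) (alpha : F) (W : {set F})
  (u : nat) : nat :=
  #|[set i : 'I_(npts q) | (i %% t == u) && ((alpha ^+ i)%R \in W)]|.

(* Orbit of k in Z_t under the group generated by i |-> p i mod t
   (exponents e < t suffice, as the order of p mod t is < t). *)
Definition orbit_mul (p t : nat) (k : 'I_t) : {set 'I_t} :=
  [set j : 'I_t | [exists e : 'I_t, (j : nat) == k * p ^ e %% t]].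

Definition s_orb (p t : nat) : nat :=
  #|[set orbit_mul p k | k in [set k : 'I_t | (k : nat) != 0]]|.

Definition orbit_reps (p t : nat) (reps : seq 'I_t) : Prop :=
  [/\ uniq reps,
      (forall r, r \in reps -> (r : nat) != 0) &
      (forall k : 'I_t, (k : nat) != 0 ->
         count (fun r => k \in orbit_mul p r) reps = 1)].
Arguments tau_pt : clear implicits.
Arguments orbit_reps : clear implicits.
Arguments orbit_mul : clear implicits.

From HB Require Import structures.
From mathcomp Require Import all_boot all_order all_algebra all_field.
From mathcomp Require Import zify ring.
Set Implicit Arguments. Unset Strict Implicit. Unset Printing Implicit Defensive.
Import GRing.Theory Num.Theory.

(* The points of l_0 are the residues i mod n = q^2+q+1 with alpha^i in l_0, and
   they form a Singer difference set: if two distinct points of l_0 were both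
   moved into l_0 by alpha^k, multiplication by alpha^k would stabilise the
   2-dimensional F_q-space l_0, so alpha^k would have degree at most 2 over F_q,
   hence lie in F_q, i.e. n | k.  Hence every nonzero residue mod n is exactly
   one difference of two points, which gives sum_u w_u = q+1 and
   sum_u w_u^2 = (q+1) + (n/t - 1).  Since tau maps l_0 onto itself, w_u <= w_(pu),
   and going around the cycle u -> pu -> ... forces w to be constant on the
   orbits of <p> on Z_t; these orbits all have the same length (t-1)/s(p,t). *)

Lemma card_set_sum (T : finType) (P : pred T) : #|[set x | P x]| = \sum_x P x.
Proof.
rewrite -sum1_card big_mkcond /=; apply: eq_bigr => x _.
by rewrite inE; case: (P x).
Qed.

Lemma eq_modMl_coprime c d a b :
  coprime c d -> c * a = c * b %[mod d] -> a = b %[mod d].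
Proof.
move=> cop; wlog le_ab : a b / a <= b.
  move=> IH; case: (leqP a b) => [|/ltnW]; first exact: IH.
  by move=> le_ba /esym/(IH _ _ le_ba).
move=> /eqP; rewrite eq_sym eqn_mod_dvd ?leq_mul2l ?le_ab ?orbT // -mulnBr.
rewrite Gauss_dvdr => [dv|]; last by rewrite coprime_sym.
by apply/eqP; rewrite eq_sym eqn_mod_dvd.
Qed.

Lemma coprime_dvd_npts p h d : 0 < h -> d %| npts (p ^ h) -> coprime p d.
Proof.
move=> h_gt0 /coprime_dvdr; apply; rewrite /npts.
have /dvdnP[k ->] : p %| (p ^ h) ^ 2 + p ^ h.
  by rewrite dvdn_add ?dvdn_exp // dvdn_exp.
by rewrite -addn1 /coprime gcdnMDl gcdn1.
Qed.

(** * Orbits of multiplication by p on Z_t *)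

Section MulOrbits.
Variables (p t : nat).
Hypotheses (pr_t : prime t) (cop : coprime p t).

Let t_gt0 : 0 < t. Proof. exact: prime_gt0. Qed.

Lemma fermat_pred : p ^ (t - 1) = 1 %[mod t].
Proof.
apply: (@eq_modMl_coprime p) => //.
by rewrite muln1 -expnS subn1 prednK // fermat_little.
Qed.

Lemma expn_mod_pred e : p ^ e = p ^ (e %% (t - 1)) %[mod t].
Proof.
rewrite {1}(divn_eq e (t - 1)) expnD [_ * (t - 1)]mulnC expnM.
have t_gt1 := prime_gt1 pr_t.
by rewrite -modnMml -modnXm fermat_pred (modn_small t_gt1) exp1n (modn_small t_gt1) mul1n.
Qed.

Lemma orbit_mul_invariant (f : nat -> nat) :
  (forall x, f (x %% t) <= f (x * p %% t)) ->
  forall x e, f (x * p ^ e %% t) = f (x %% t).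
Proof.
move=> f_le.
have f_le_pow x e : f (x %% t) <= f (x * p ^ e %% t).
  elim: e => [|e IH]; first by rewrite expn0 muln1.
  by apply: (leq_trans IH); rewrite expnSr mulnA f_le.
have f_mulp x : f (x * p %% t) = f (x %% t).
  apply/eqP; rewrite eqn_leq f_le andbT.
  have := f_le_pow (x * p) (t - 2); rewrite -mulnA -expnS.
  have -> : (t - 2).+1 = t - 1 by have := prime_gt1 pr_t; lia.
  by move/leq_trans; apply; rewrite -modnMmr fermat_pred modnMmr muln1.
move=> x; elim=> [|e IH]; first by rewrite expn0 muln1.
by rewrite expnSr mulnA f_mulp IH.
Qed.

Local Notation orbit := (orbit_mul p t).

Lemma orbit_mulP (r j : 'I_t) :
  reflect (exists e, j = r * p ^ e %% t :> nat) (j \in orbit r).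
Proof.
rewrite inE; apply: (iffP existsP) => [[e /eqP ->] | [e ->]]; first by exists e.
have lt : e %% (t - 1) < t.
  by rewrite (leq_trans (ltn_pmod _ _)) ?leq_subr // subn_gt0 prime_gt1.
by exists (Ordinal lt); rewrite /= -modnMmr expn_mod_pred modnMmr.
Qed.

Lemma orbit_mul_id (r : 'I_t) : r \in orbit r.
Proof. by apply/orbit_mulP; exists 0; rewrite expn0 muln1 modn_small. Qed.

Lemma orbit_mul_sub (k r : 'I_t) : k \in orbit r -> orbit k \subset orbit r.
Proof.
case/orbit_mulP => e ek; apply/subsetP => j /orbit_mulP[e' je].
by apply/orbit_mulP; exists (e + e'); rewrite je ek modnMml expnD mulnA.
Qed.

Lemma orbit_mul_neq0 (r j : 'I_t) : r != 0 :> nat -> j \in orbit r -> j != 0 :> nat.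
Proof.
move=> r0 /orbit_mulP[e ->]; rewrite -/(dvdn t _).
rewrite Gauss_dvdl; last by rewrite coprimeXr // coprime_sym.
by rewrite gtnNdvd ?lt0n.
Qed.

Definition modt (m : nat) : 'I_t := Ordinal (ltn_pmod m t_gt0).

Definition pow_residues : {set 'I_t} := [set modt (p ^ e) | e : 'I_t].

Lemma card_orbit_mul (k : 'I_t) : k != 0 :> nat -> #|orbit k| = #|pow_residues|.
Proof.
move=> k0.
have -> : orbit k = (fun j : 'I_t => modt (k * j)) @: pow_residues.
  apply/setP => j; rewrite inE; apply/existsP/imsetP => [[e /eqP ej] | [_ /imsetP[e _ ->] ->]].
    by exists (modt (p ^ e)); [apply: imset_f | apply: val_inj; rewrite /= modnMmr].
  by exists e; rewrite /= modnMmr.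
apply: card_imset => a b /(congr1 val) /= /eq_modMl_coprime.
rewrite coprime_sym prime_coprime // gtnNdvd ?lt0n // => /(_ isT).
by rewrite !modn_small // => /val_inj.
Qed.

Lemma orbit_mul_eq (k r : 'I_t) :
  k != 0 :> nat -> r != 0 :> nat -> k \in orbit r -> orbit k = orbit r.
Proof.
move=> k0 r0 kr; apply/eqP.
by rewrite eqEcard orbit_mul_sub //= !card_orbit_mul.
Qed.

Variable reps : seq 'I_t.
Hypothesis reps_orb : orbit_reps p t reps.

Let reps_neq0 r : r \in reps -> r != 0 :> nat.
Proof. by case: reps_orb => _ + _; apply. Qed.

Let count_reps (k : 'I_t) : k != 0 :> nat -> count (fun r => k \in orbit r) reps = 1.
Proof. by case: reps_orb => _ _ +; apply. Qed.

Lemma orbit_mul_reps_inj : {in reps &, injective orbit}.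
Proof.
move=> r1 r2 r1i r2i e12; apply/eqP/negPn/negP => ne.
have := count_reps (reps_neq0 r1i); rewrite -size_filter.
suff : 2 <= size [seq r <- reps | r1 \in orbit r] by move=> /[swap] ->.
apply: (@uniq_leq_size _ [:: r1; r2]); first by rewrite /= inE ne.
move=> x; rewrite !inE mem_filter => /orP[] /eqP ->.
  by rewrite orbit_mul_id r1i.
by rewrite -e12 orbit_mul_id r2i.
Qed.

Lemma s_orb_reps : s_orb p t = size reps.
Proof.
have uq : uniq reps by case: reps_orb.
rewrite /s_orb (_ : [set orbit k | k in _] = [set orbit r | r in reps]).
  by rewrite card_in_imset; [exact/card_uniqP | exact: orbit_mul_reps_inj].
apply/setP => S; apply/imsetP/imsetP => [[k] | [r ri ->]].
  rewrite inE => k0 ->.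
  have /hasP[r ri kr] : has (fun r => k \in orbit r) reps by rewrite has_count count_reps.
  by exists r; rewrite // (orbit_mul_eq k0 (reps_neq0 ri)).
by exists r; rewrite // inE reps_neq0.
Qed.

Lemma sum_orbit_mul_reps (f : nat -> nat) :
  (forall x e, f (x * p ^ e %% t) = f (x %% t)) ->
  \sum_(u < t) f u = f 0 + #|pow_residues| * \sum_(r <- reps) f r.
Proof.
move=> f_inv; rewrite (bigD1 (modt 0)) //= mod0n; congr (_ + _).
rewrite (eq_bigl (fun u : 'I_t => u != 0 :> nat)) => [|u]; last first.
  by rewrite -val_eqE /= mod0n.
have f_orbit r u : u \in orbit r -> f u = f r.
  by case/orbit_mulP => e ->; rewrite f_inv modn_small.
transitivity (\sum_(u < t | u != 0 :> nat) \sum_(r <- reps) (u \in orbit r) * f u).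
  apply: eq_bigr => u u0.
  by rewrite -big_distrl /= -[LHS]mul1n -(count_reps u0) -sum1_count big_mkcond.
rewrite exchange_big big_distrr /=; apply: eq_big_seq => r ri.
rewrite -(card_orbit_mul (reps_neq0 ri)) -sum_nat_const.
rewrite big_mkcond [RHS]big_mkcond /=; apply: eq_bigr => u _.
case: (boolP (u \in orbit r)) => ur; last by case: (_ != 0).
by rewrite (orbit_mul_neq0 (reps_neq0 ri) ur) mul1n (f_orbit r).
Qed.

Lemma card_pow_residues_reps : #|pow_residues| * size reps = t - 1.
Proof.
have := @sum_orbit_mul_reps (fun _ => 1) (fun _ _ => erefl).
rewrite sum_nat_const card_ord muln1 big_const_seq count_predT iter_addn_0 mul1n.
by lia.
Qed.

Lemma s_orb_gt0 : 0 < s_orb p t.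
Proof.
rewrite s_orb_reps lt0n; apply: contraTneq (prime_gt1 pr_t) => /size0nil reps0.
by rewrite -leqNgt -subn_eq0 -(card_pow_residues_reps) reps0 muln0.
Qed.


End MulOrbits.

(** * Difference counts of periodic sets of integers *)

Lemma sum_periodic_shift n i (g : nat -> nat) : (forall k, g (k + n) = g k) ->
  \sum_(k < n) g (i + k) = \sum_(k < n) g k.
Proof.
case: n => [|m] per; first by rewrite !big_ord0.
elim: i => [|i IH]; first by apply: eq_bigr => k _; rewrite add0n.
rewrite -IH big_ord_recr big_ord_recl /= addnC; congr (_ + _).
  by rewrite addn0 addSn -addnS per.
by apply: eq_bigr => k _; rewrite /bump /= add1n addSn addnS.
Qed.

(* Subsets of Z_n are encoded as n-periodic predicates on nat. *)
Definition diff_count n (chi : pred nat) k := \sum_(i < n) chi i * chi (i + k).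

Definition class_count n t (chi : pred nat) u := \sum_(i < n) ((i %% t == u) && chi i).

Section PeriodicSet.
Variables (n : nat) (chi : pred nat).
Hypothesis chi_periodic : forall k, chi (k + n) = chi k.

Lemma diff_count0 : diff_count n chi 0 = \sum_(i < n) chi i.
Proof. by apply: eq_bigr => i _; rewrite addn0; case: (chi i). Qed.

Lemma sum_diff_count : \sum_(k < n) diff_count n chi k = (\sum_(i < n) chi i) ^ 2.
Proof.
rewrite /diff_count exchange_big /= expnS expn1 big_distrl /=.
apply: eq_bigr => i _; rewrite -big_distrr /=; congr (_ * _).
by apply: (@sum_periodic_shift n i (fun k => nat_of_bool (chi k))) => k; rewrite chi_periodic.
Qed.

Variable t : nat.
Hypothesis t_gt0 : 0 < t.

Let sum_class_indicator i (g : nat -> nat) :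
  \sum_(u < t) (i %% t == u) * g u = g (i %% t).
Proof.
rewrite (bigD1 (Ordinal (ltn_pmod i t_gt0))) //= eqxx mul1n big1 ?addn0 //.
move=> u ne; suff /negbTE-> : i %% t != u by [].
by apply: contraNneq ne => eiu; apply/eqP/val_inj.
Qed.

Lemma sum_class_count : \sum_(u < t) class_count n t chi u = \sum_(i < n) chi i.
Proof.
rewrite exchange_big /=; apply: eq_bigr => i _.
rewrite -[RHS](sum_class_indicator i (fun=> chi i)).
by apply: eq_bigr => u _; rewrite mulnb.
Qed.

Hypothesis t_dvd_n : t %| n.

Lemma sum_class_count_sq :
  \sum_(u < t) class_count n t chi u ^ 2 = \sum_(k < n) (t %| k) * diff_count n chi k.
Proof.
pose same_class i j := (j %% t == i %% t) && chi j.
transitivity (\sum_(i < n) chi i * \sum_(j < n) same_class i j).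
  under eq_bigr do rewrite expnS expn1 big_distrl /=.
  rewrite exchange_big /=; apply: eq_bigr => i _.
  rewrite -(sum_class_indicator i (fun u => chi i * class_count n t chi u)).
  by apply: eq_bigr => u _; rewrite mulnA mulnb.
have same_class_periodic i k : same_class i (k + n) = same_class i k.
  by rewrite /same_class chi_periodic -modnDm (eqP t_dvd_n) addn0 modn_mod.
transitivity (\sum_(i < n) chi i * \sum_(k < n) ((t %| k) * chi (i + k))).
  apply: eq_bigr => i _; congr (_ * _).
  rewrite -(@sum_periodic_shift n i (fun k => nat_of_bool (same_class i k))); last first.
    by move=> k; rewrite same_class_periodic.
  apply: eq_bigr => k _.
  by rewrite /same_class -{2}(addn0 i) eqn_modDl mod0n mulnb.
rewrite /diff_count; under eq_bigr do rewrite big_distrr /=.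
rewrite exchange_big /=; apply: eq_bigr => k _; rewrite big_distrr /=.
by apply: eq_bigr => i _; rewrite mulnCA.
Qed.

End PeriodicSet.

(* The m^2+m nonzero differences of m+1 elements are spread over the m^2+m nonzero
   residues, at most one each. *)
Lemma planar_diff_count m (chi : pred nat) :
  (forall k, chi (k + npts m) = chi k) ->
  \sum_(i < npts m) chi i = m.+1 ->
  (forall k, 0 < k < npts m -> diff_count (npts m) chi k <= 1) ->
  forall k, 0 < k < npts m -> diff_count (npts m) chi k = 1.
Proof.
move=> per card_chi le1.
have sum_nonzero : \sum_(j < m ^ 2 + m) diff_count (npts m) chi j.+1 = \sum_(j < m ^ 2 + m) 1.
  have := sum_diff_count per; rewrite big_ord_recl diff_count0 card_chi sum_nat_const.
  rewrite card_ord muln1 (_ : m.+1 ^ 2 = m.+1 + (m ^ 2 + m)); last by lia.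
  by move/addnI.
have /(leqif_sum (P := xpredT)) : forall j : 'I_(m ^ 2 + m),
    xpredT j -> diff_count (npts m) chi j.+1 <= 1 ?= iff (diff_count (npts m) chi j.+1 == 1).
  by move=> j _; apply/leqif_eq/le1; rewrite /npts !ltnS leq0n ltn_ord.
move=> -[_ eq_all] k /andP[k_gt0 k_lt].
have /forallP all1 : [forall (j : 'I_(m ^ 2 + m) | true), diff_count (npts m) chi j.+1 == 1].
  by rewrite -eq_all; apply/eqP; exact: sum_nonzero.
have k1 : k.-1 < m ^ 2 + m by rewrite -ltnS prednK.
by have := all1 (Ordinal k1); rewrite /= prednK // => /eqP.
Qed.

Lemma sum_dvd_planar_diff_count m t (chi : pred nat) :
  t %| npts m -> (forall k, 0 < k < npts m -> diff_count (npts m) chi k = 1) ->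
  \sum_(i < npts m) chi i = m.+1 ->
  \sum_(k < npts m) (t %| k) * diff_count (npts m) chi k = m + npts m %/ t.
Proof.
move=> t_dvd diff1 card_chi.
rewrite big_ord_recl dvdn0 mul1n diff_count0 card_chi.
have diff1_bump (j : 'I_(m ^ 2 + m)) : diff_count (npts m) chi (bump 0 j) = 1.
  by rewrite diff1 // /bump add1n /npts !ltnS ltn_ord.
under eq_bigr do rewrite diff1_bump muln1.
rewrite (divn_count_dvd t (npts m)) big_nat_recr //= t_dvd addn1 addSn -addnS.
by rewrite [in RHS]/npts big_add1 big_mkord.
Qed.

Local Open Scope ring_scope.

(** * The subfield fixed by the q-power Frobenius map *)

Definition Fq {F : finFieldType} (q : nat) : {set F} := [set c : F | c ^+ q == c].

Section FixedPow.
Variables (F : finFieldType) (q : nat).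

Lemma Fq_exprq (c : F) : c \in Fq q -> c ^+ q = c.
Proof. by rewrite inE => /eqP. Qed.

Lemma FqM (a b : F) : a \in Fq q -> b \in Fq q -> a * b \in Fq q.
Proof. by rewrite !inE exprMn => /eqP-> /eqP->. Qed.

Lemma FqV (a : F) : a \in Fq q -> a^-1 \in Fq q.
Proof. by rewrite !inE exprVn => /eqP->. Qed.

End FixedPow.

Section FrobeniusFixed.
Variables (F : finFieldType) (p h : nat).
Hypotheses (pr_p : prime p) (chF : p \in [pchar F]).
Local Notation q := (p ^ h)%N.

Let pchar_q : [pchar F].-nat q.
Proof. by rewrite pnatX (pnatE _ pr_p) chF. Qed.

Lemma exprqD (x y : F) : (x + y) ^+ q = x ^+ q + y ^+ q.
Proof. exact: exprDn_pchar pchar_q. Qed.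

Lemma exprqB (x y : F) : (x - y) ^+ q = x ^+ q - y ^+ q.
Proof. by rewrite exprqD (exprNn_pchar _ pchar_q). Qed.

Lemma exprq_inj : injective (fun x : F => x ^+ q).
Proof.
move=> x y /eqP; rewrite -subr_eq0 -exprqB expf_eq0 subr_eq0.
by case/andP=> _ /eqP.
Qed.

Lemma FqB (a b : F) : a \in Fq q -> b \in Fq q -> a - b \in Fq q.
Proof. by rewrite !inE exprqB => /eqP-> /eqP->. Qed.

(* g, g^q and g^(q^2) are roots of the same quadratic and g^(q^3) = g, so two of
   them coincide, and either coincidence forces g^q = g. *)
Lemma Fq_quadratic (g a b : F) : (forall x : F, x ^+ q ^+ q ^+ q = x) ->
  a \in Fq q -> b \in Fq q -> g * g = a + b * g -> g \in Fq q.
Proof.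
move=> frob3 aFq bFq.
have root_frob r : r * r = a + b * r -> r ^+ q * r ^+ q = a + b * r ^+ q.
  by move=> e; rewrite -exprMn e exprqD exprMn (Fq_exprq aFq) (Fq_exprq bFq).
have root_eq r1 r2 : r1 * r1 = a + b * r1 -> r2 * r2 = a + b * r2 ->
    r1 = r2 \/ r1 + r2 = b.
  move=> e1 e2; have : (r1 - r2) * (r1 + r2 - b) = 0.
    transitivity (r1 * r1 - r2 * r2 - b * (r1 - r2)); first by ring.
    by rewrite e1 e2; ring.
  by move/eqP; rewrite mulf_eq0 !subr_eq0 => /orP[] /eqP; [left | right].
move=> e1; have e2 := root_frob _ e1; have e3 := root_frob _ e2.
rewrite inE; apply/eqP.
have [/exprq_inj//|sum21] := root_eq _ _ e3 e2.
have [eq20|sum20] := root_eq _ _ e3 e1; first by rewrite -[RHS]frob3 eq20.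
by apply: (@addrI _ (g ^+ q ^+ q)); rewrite sum21 sum20.
Qed.

End FrobeniusFixed.

(** * A line of PG(2,q) under the Singer cycle *)

Section LineCounts.
Variables (q t : nat) (F : finFieldType) (alpha : F) (W : {set F}).

Lemma wcountE u :
  wcount q t alpha W u = class_count (npts q) t (fun m => alpha ^+ m \in W) u.
Proof. exact: card_set_sum. Qed.

Lemma wcount_le_mulp p : (t %| npts q)%N ->
    tau_pt q p @: line_pts q alpha W = line_pts q alpha W ->
  forall x, (wcount q t alpha W (x %% t) <= wcount q t alpha W (x * p %% t))%N.
Proof.
move=> t_dvd tauD x; rewrite /wcount.
set A := [set i : 'I_(npts q) | _].
have tau_inj : {in line_pts q alpha W &, injective (tau_pt q p)}.
  by apply/imset_injP; rewrite tauD.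
have sub_A : {subset A <= line_pts q alpha W} by move=> i; rewrite !inE => /andP[].
rewrite -(card_in_imset (sub_in2 sub_A tau_inj)); apply/subset_leq_card/subsetP.
move=> _ /imsetP[i iA ->]; move: iA; rewrite !inE => /andP[/eqP it iW].
have : tau_pt q p i \in line_pts q alpha W by rewrite -tauD imset_f // inE.
by rewrite inE => ->; rewrite andbT /= (modn_dvdm _ t_dvd) -modnMml it modnMml.
Qed.

End LineCounts.

Section SingerCycle.
Variables (p h : nat) (F : finFieldType) (alpha : F).
Hypotheses (pr_p : prime p) (h_gt0 : (0 < h)%N) (cardF : #|F| = ((p ^ h) ^ 3)%N)
  (prim : (#|F|.-1).-primitive_root alpha).
Local Notation q := (p ^ h)%N.
Local Notation n := (npts q).

Let q_gt1 : (1 < q)%N.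
Proof. by rewrite -(expn0 p) ltn_exp2l // prime_gt1. Qed.

Let chF : p \in [pchar F].
Proof. by apply: (card_finPcharP (n := (h * 3)%N)); rewrite // expnM. Qed.

Lemma card_F_pred : #|F|.-1 = (n * (q - 1))%N.
Proof. by rewrite cardF /npts -!subn1 !expnS expn0; have := q_gt1; nia. Qed.

Lemma expr_alpha_neq0 m : alpha ^+ m != 0.
Proof.
rewrite expf_neq0 // (prim_root_eq0 prim) card_F_pred muln_eq0 negb_or.
by rewrite subn_eq0 -ltnNge q_gt1.
Qed.

Lemma exprq3 (x : F) : x ^+ q ^+ q ^+ q = x.
Proof. by rewrite -!exprM -[RHS](expf_card x) cardF. Qed.

Lemma expr_alpha_Fq a : (alpha ^+ a \in Fq q) = (n %| a)%N.
Proof.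
rewrite inE -exprM (eq_prim_root_expr prim) card_F_pred.
have -> : (a * q = a + a * (q - 1))%N by rewrite -mulnS subn1 prednK // ltnW.
rewrite -[X in _ == X %[mod _]](addn0 a) eqn_modDl mod0n -/(dvdn _ _).
by rewrite dvdn_pmul2r // subn_gt0.
Qed.

Lemma expr_alpha_surj (x : F) : x != 0 -> exists2 m, (m < #|F|.-1)%N & x = alpha ^+ m.
Proof.
move=> x_neq0; pose A := [set alpha ^+ i | i : 'I_#|F|.-1].
have cardA : #|A| = #|F|.-1.
  rewrite card_imset ?card_ord // => i j /eqP.
  by rewrite (eq_prim_root_expr prim) !modn_small // => /eqP/ord_inj.
have : A == [set~ 0].
  rewrite eqEcard cardsC1 cardA leqnn andbT.
  by apply/subsetP => y /imsetP[i _ ->]; rewrite !inE expr_alpha_neq0.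
by move/eqP/setP/(_ x); rewrite !inE x_neq0 => /imsetP[i _ ->]; exists i.
Qed.

Let n_dvd : (n %| #|F|.-1)%N.
Proof. by rewrite card_F_pred dvdn_mulr. Qed.

Lemma card_Fq : #|Fq q : {set F}| = q.
Proof.
pose A := [set alpha ^+ (n * e) | e : 'I_(q - 1)].
have cardA : #|A| = (q - 1)%N.
  rewrite card_imset ?card_ord // => i j /eqP.
  rewrite (eq_prim_root_expr prim) card_F_pred -!muln_modr !modn_small //.
  by rewrite eqn_pmul2l // => /eqP/ord_inj.
have -> : Fq q = 0 |: A.
  apply/setP => c; rewrite !inE; apply/idP/idP.
    have [-> //|c_neq0 cFq] := eqVneq c 0.
    have [m m_lt cE] := expr_alpha_surj c_neq0.
    have /divnK mE : (n %| m)%N by rewrite -expr_alpha_Fq -cE inE.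
    have lt : (m %/ n < q - 1)%N by rewrite ltn_divLR // mulnC -card_F_pred.
    by apply/imsetP; exists (Ordinal lt); rewrite //= cE mulnC mE.
  case/orP => [/eqP-> | /imsetP[e _ ->]]; first by rewrite expr0n gtn_eqF // ltnW.
  by have := expr_alpha_Fq (n * e); rewrite inE dvdn_mulr // => ->.
have /negPf A0 : 0 \notin A.
  by apply/imsetP => -[e _ /esym/eqP]; rewrite (negbTE (expr_alpha_neq0 _)).
by rewrite cardsU1 A0 cardA add1n subn1 prednK // ltnW.
Qed.

Section Line.
Variable W : {set F}.
Hypothesis lineW : is_line q W.

Let line0 : 0 \in W.
Proof. by case: lineW => -[]. Qed.

Let lineD x y : x \in W -> y \in W -> x + y \in W.
Proof. by case: lineW => -[_ + _] _; apply. Qed.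

Let lineZ c x : c \in Fq q -> x \in W -> c * x \in W.
Proof. by case: lineW => -[_ _ lineZ] _; rewrite inE => /eqP; apply: lineZ. Qed.

Lemma lineZ_eq c x : c \in Fq q -> c != 0 -> (c * x \in W) = (x \in W).
Proof.
move=> cFq c_neq0; apply/idP/idP; last exact: lineZ.
by move/(lineZ (FqV cFq)); rewrite mulrA mulVf // mul1r.
Qed.

Lemma line_expr_mod a b : a = b %[mod n] -> (alpha ^+ a \in W) = (alpha ^+ b \in W).
Proof.
wlog le_ba : a b / (b <= a)%N.
  by move=> IH; case: (leqP b a) => [/IH//|/ltnW le_ab /esym/(IH _ _ le_ab)/esym].
move/eqP; rewrite eqn_mod_dvd // -expr_alpha_Fq => ab_Fq.
by rewrite -(subnK le_ba) exprD lineZ_eq ?expr_alpha_neq0.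
Qed.

Lemma card_line_pts : #|line_pts q alpha W| = q.+1.
Proof.
(* The nonzero vectors of the point P_i are the alpha^(i + n e), e < q - 1. *)
pose f (ie : 'I_n * 'I_(q - 1)) := alpha ^+ (ie.1 + n * ie.2).
have f_inj : injective f.
  move=> [i e] [i' e'] /eqP; rewrite /f (eq_prim_root_expr prim) => /eqP E.
  have := congr1 (modn^~ n) E; rewrite /= !(modn_dvdm _ n_dvd).
  rewrite (addnC i) (addnC i') (mulnC n e) (mulnC n e') !modnMDl !modn_small //.
  move=> /ord_inj ii'.
  move: E; rewrite ii' => /eqP.
  rewrite eqn_modDl card_F_pred -!muln_modr !modn_small // eqn_pmul2l //.
  by move/eqP/ord_inj => /= ->.
have im_f : f @: setX (line_pts q alpha W) setT = W :\ 0.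
  apply/setP => x; rewrite !inE; apply/imsetP/andP => [[[i e]] | [x_neq0 xW]].
    rewrite !inE andbT /f => iW ->; rewrite expr_alpha_neq0.
    by rewrite (line_expr_mod (b := i)) // (addnC i) (mulnC n) modnMDl.
  have [m m_lt xE] := expr_alpha_surj x_neq0; rewrite {}xE in xW *.
  have lt : (m %/ n < q - 1)%N by rewrite ltn_divLR // mulnC -card_F_pred.
  exists (Ordinal (ltn_pmod m (ltn0Sn _)), Ordinal lt).
    by rewrite !inE andbT /= (line_expr_mod (modn_mod m n)).
  by rewrite /f /= (addnC (m %% n)%N) (mulnC n) -divn_eq.
have : #|W :\ 0| = (q.+1 * (q - 1))%N.
  case: lineW => _; rewrite (cardsD1 0 W) line0 add1n => /(congr1 predn) /= ->.
  by rewrite -subn1 expnS expn1; nia.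
rewrite -im_f card_imset // cardsX cardsT card_ord.
by move/eqP; rewrite eqn_pmul2r ?subn_gt0 // => /eqP.
Qed.

Lemma line_span (x y : F) : x \in W -> y \in W -> x != 0 ->
    (forall c, c \in Fq q -> y != c * x) ->
  forall z, z \in W -> exists a b, [/\ a \in Fq q, b \in Fq q & z = a * x + b * y].
Proof.
move=> xW yW x_neq0 y_indep z zW.
pose f (ab : F * F) := ab.1 * x + ab.2 * y.
have f_inj : {in setX (Fq q) (Fq q) &, injective f}.
  move=> [a b] [a' b'] /setXP[/= aFq bFq] /setXP[/= a'Fq b'Fq]; rewrite /f /= => E.
  have E' : (a - a') * x = (b' - b) * y.
    transitivity (a * x + b * y - a' * x - b * y); first by ring.
    by rewrite E; ring.
  have [bb'|] := eqVneq b' b.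
    move: E'; rewrite bb' subrr mul0r => /eqP.
    by rewrite mulf_eq0 (negPf x_neq0) orbF subr_eq0 => /eqP->.
  rewrite -subr_eq0 => nz.
  have cFq : (b' - b)^-1 * (a - a') \in Fq q by rewrite FqM ?FqV ?(FqB pr_p chF).
  case/negP: (y_indep _ cFq); apply/eqP.
  by rewrite -mulrA E' mulrA mulVf // mul1r.
have : f @: setX (Fq q) (Fq q) == W.
  rewrite eqEcard card_in_imset // cardsX card_Fq; case: lineW => _ -> /=.
  rewrite mulnn leqnn andbT; apply/subsetP => _ /imsetP[[a b] /setXP[/= aFq bFq] ->].
  by rewrite lineD ?lineZ.
move/eqP/setP/(_ z); rewrite zW => /imsetP[[a b] /setXP[/= aFq bFq] ->].
by exists a, b.
Qed.

Lemma line_stabilizer_Fq (g : F) : (forall z, z \in W -> g * z \in W) -> g \in Fq q.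
Proof.
move=> gW.
have /card_gt0P[x] : (0 < #|W :\ 0%R|)%N.
  case: lineW => _; rewrite (cardsD1 0) line0 add1n expnS expn1 => cardW.
  by rewrite -ltnS cardW (leq_trans q_gt1) // leq_pmulr // ltnW.
move=> /setD1P[x_neq0 xW].
have [/exists_inP[c cFq /eqP gxE]|] := boolP [exists c in Fq q, g * x == c * x].
  by rewrite (mulIf x_neq0 gxE).
move/exists_inPn => gx_indep.
have [a [b [aFq bFq E]]] := line_span xW (gW _ xW) x_neq0 gx_indep (gW _ (gW _ xW)).
apply: (Fq_quadratic pr_p chF exprq3 aFq bFq); apply: (mulIf x_neq0).
by rewrite -mulrA E mulrDl mulrA.
Qed.

Lemma expr_alpha_Fq_ratio i j (c : F) :
  c \in Fq q -> alpha ^+ j = c * alpha ^+ i -> (i = j %[mod n])%N.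
Proof.
move=> cFq ajE.
have c_neq0 : c != 0.
  by apply: contraTneq (expr_alpha_neq0 j) => c0; rewrite ajE c0 mul0r eqxx.
have [m _ cE] := expr_alpha_surj c_neq0.
have /eqP n_m : (m %% n == 0)%N by rewrite -/(dvdn _ _) -expr_alpha_Fq -cE.
move: ajE; rewrite cE -exprD => /eqP; rewrite (eq_prim_root_expr prim).
move=> /eqP/(congr1 (modn^~ n)) /=; rewrite !(modn_dvdm _ n_dvd) -modnDml n_m add0n.
by move=> ->.
Qed.

Lemma line_diff_unique (i j : 'I_n) k : (0 < k < n)%N ->
  alpha ^+ i \in W -> alpha ^+ (i + k) \in W ->
  alpha ^+ j \in W -> alpha ^+ (j + k) \in W -> i = j.
Proof.
move=> /andP[k_gt0 k_lt] iW ikW jW jkW.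
have [//|ij] := eqVneq i j; case/negP: (gtnNdvd k_gt0 k_lt).
rewrite -expr_alpha_Fq; apply: line_stabilizer_Fq => z zW.
have j_indep c : c \in Fq q -> alpha ^+ j != c * alpha ^+ i.
  move=> cFq; apply: contraNneq ij => /(expr_alpha_Fq_ratio cFq).
  by rewrite !modn_small // => /val_inj->.
have [a [b [aFq bFq ->]]] := line_span iW jW (expr_alpha_neq0 i) j_indep zW.
by rewrite mulrDr !(mulrCA (alpha ^+ k)) -!exprD !(addnC k) lineD ?lineZ.
Qed.

Lemma line_diff_count_le1 k : (0 < k < n)%N ->
  (diff_count n (fun m => alpha ^+ m \in W) k <= 1)%N.
Proof.
move=> k_range; rewrite /diff_count.
under eq_bigr do rewrite mulnb.
rewrite -(card_set_sum (fun i : 'I_n => (alpha ^+ i \in W) && (alpha ^+ (i + k) \in W))).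
apply/card_le1P => i; rewrite inE => /andP[iW ikW] j; rewrite !inE.
apply/andP/eqP => [[jW jkW] | ->] //.
exact: (line_diff_unique k_range jW jkW iW ikW).
Qed.

Local Notation chi := (fun m => alpha ^+ m \in W).

Let chi_periodic k : chi (k + n)%N = chi k.
Proof. by apply: line_expr_mod; rewrite modnDr. Qed.

Let sum_chi : (\sum_(i < n) chi i)%N = q.+1.
Proof. by rewrite -card_line_pts card_set_sum. Qed.

Lemma line_diff_count1 k : (0 < k < n)%N -> diff_count n chi k = 1%N.
Proof. exact: planar_diff_count chi_periodic sum_chi line_diff_count_le1 k. Qed.

Lemma sum_wcount t : (0 < t)%N -> (\sum_(u < t) wcount q t alpha W u)%N = q.+1.
Proof. by move=> t_gt0; under eq_bigr do rewrite wcountE; rewrite sum_class_count. Qed.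

Lemma sum_wcount_sq t : (0 < t)%N -> (t %| n)%N ->
  (\sum_(u < t) wcount q t alpha W u ^ 2)%N = (q + n %/ t)%N.
Proof.
move=> t_gt0 t_dvd; under eq_bigr do rewrite wcountE.
by rewrite sum_class_count_sq // (sum_dvd_planar_diff_count t_dvd line_diff_count1 sum_chi).
Qed.

End Line.

End SingerCycle.


Theorem corollary2 (p h t : nat) (F : finFieldType) (alpha : F)
  (W : {set F}) (reps : seq 'I_t) :
  prime p -> (0 < h)%N -> #|F| = ((p ^ h) ^ 3)%N ->
  (#|F|.-1).-primitive_root alpha ->
  is_line (p ^ h) W ->
  (tau_pt (p ^ h) p) @: line_pts (p ^ h) alpha W = line_pts (p ^ h) alpha W ->
  prime t -> (t %| npts (p ^ h))%N ->
  orbit_reps p t reps ->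
  let q := (p ^ h)%N in
  let w := wcount q t alpha W in
  (w 0%N)%:R + (t - 1)%:R / (s_orb p t)%:R * \sum_(r <- reps) (w r)%:R
    = (q + 1)%:R :> rat
  /\
  ((w 0%N) ^ 2)%:R + (t - 1)%:R / (s_orb p t)%:R * \sum_(r <- reps) ((w r) ^ 2)%:R
    = (q ^ 2 + (t + 1) * q + 1)%:R / t%:R :> rat.
Proof.
move=> pr_p h_gt0 cardF prim lineW tauD pr_t t_dvd reps_orb q w.
have t_gt0 := prime_gt0 pr_t; have cop := coprime_dvd_npts h_gt0 t_dvd.
have w_inv := orbit_mul_invariant pr_t cop (wcount_le_mulp t_dvd tauD).
have w_sq_inv x e : (w (x * p ^ e %% t) ^ 2 = w (x %% t) ^ 2)%N by rewrite /w w_inv.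
have coef : (t - 1)%:R / (s_orb p t)%:R = #|pow_residues p pr_t|%:R :> rat.
  rewrite -(card_pow_residues_reps pr_t cop reps_orb) -(s_orb_reps pr_t cop reps_orb).
  by rewrite natrM mulfK // pnatr_eq0 -lt0n (s_orb_gt0 pr_t cop reps_orb).
rewrite coef -!natr_sum -!natrM -!natrD; split.
  rewrite -(sum_orbit_mul_reps pr_t cop reps_orb w_inv).
  by rewrite (sum_wcount pr_p h_gt0 cardF prim lineW) // addn1.
rewrite -(sum_orbit_mul_reps pr_t cop reps_orb (f := fun u => w u ^ 2)%N w_sq_inv).
rewrite (sum_wcount_sq pr_p h_gt0 cardF prim lineW) //.
rewrite (_ : (q ^ 2 + (t + 1) * q + 1 = (q + npts q %/ t) * t)%N).
  by rewrite natrM mulfK // pnatr_eq0 -lt0n.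
by rewrite [RHS]mulnDl divnK // /npts; lia.
Qed.
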